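(* Fix one of the two variants $\sharp\in\{\text{lumped},\text{exact}\}$ described in the context. Let $\vec X^m\in\underline V^h_{\partial_0}$ satisfy assumption $(\mathfrak A)$, and let $\Delta t_m>0$. Then there exists a unique pair $(\delta\vec X^{m+1},\vec\kappa^{m+1})\in\underline V^h_\partial\times[W_\sharp]^2$ such that, with $\vec X^{m+1}=\vec X^m+\delta\vec X^{m+1}$, $$\Big(\vec X^m\cdot\vec e_1\,\tfrac{\vec X^{m+1}-\vec X^m}{\Delta t_m},\vec\chi\,|\vec X^m_\rho|\Big)_\sharp=\Big((\vec X^m\cdot\vec e_1)\vec\kappa^{m+1},\vec\chi\,|\vec X^m_\rho|\Big)_\sharp\quad\forall\,\vec\chi\in[W_\sharp]^2,$$ $$\Big((\vec X^m\cdot\vec e_1)\vec\kappa^{m+1},\vec\eta\,|\vec X^m_\rho|\Big)_\sharp+\big(\vec\eta\cdot\vec e_1,|\vec X^m_\rho|\big)+\Big((\vec X^m\cdot\vec e_1)\vec X^{m+1}_\rho,\vec\eta_\rho|\vec X^m_\rho|^{-1}\Big)=-\sum_{i=1}^2\sum_{p\in\partial_iI}\widehat\varrho^{(p)}(\vec X^m(p)\cdot\vec e_1)\,\vec\eta(p)\cdot\vec e_{3-i}\quad\forall\,\vec\eta\in\underline V^h_\partial .$$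
   Context: Setup. $\vec e_1=(1,0)^T$, $\vec e_2=(0,1)^T$; ''$\cdot$'' is the Euclidean inner product. $I$ is either the periodic interval $\mathbb R/\mathbb Z$ (with $\partial I=\emptyset$) or $I=(0,1)$ (with $\partial I=\{0,1\}$). $\partial I=\partial_DI\cup\partial_0I\cup\partial_1I\cup\partial_2I$ is a given disjoint partition, and $\widehat\varrho^{(p)}\in\mathbb R$, $p\in\{0,1\}$, are given constants with $|\widehat\varrho^{(p)}|\le1$. Let $J\ge3$, $h=1/J$, $q_j=jh$ ($j=0,\dots,J$; $q_0=q_J$ identified in the periodic case). $V^h$ is the space of continuous functions on $\overline I$ (periodic if $I=\mathbb R/\mathbb Z$) that are affine on each $[q_{j-1},q_j]$; $\underline V^h=[V^h]^2$; $\underline V^h_{\partial_0}=\{\vec\eta\in\underline V^h:\vec\eta(\rho)\cdot\vec e_1=0\ \forall\rho\in\partial_0I\}$; $\underline V^h_\partial=\{\vec\eta\in\underline V^h_{\partial_0}:\vec\eta(\rho)\cdot\vec e_i=0\ \forall\rho\in\partial_iI,\ i=1,2;\ \vec\eta(\rho)=\vec0\ \forall\rho\in\partial_DI\}$; $W^h_{\partial_0}=\{\chi\in V^h:\chi(\rho)=0\ \forall\rho\in\partial_0I\}$. $(\cdot,\cdot)$ is the $L^2(I)$ inner product (with dot product for vector functions), and for piecewise continuous $f,g$ the mass-lumped product is $(f,g)^h=\tfrac h2\sum_{j=1}^J[(fg)(q_j^-)+(fg)(q_{j-1}^+)]$. Two variants: in the ''lumped'' variant $(\cdot,\cdot)_\sharp=(\cdot,\cdot)^h$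 and $W_\sharp=W^h_{\partial_0}$; in the ''exact'' variant $(\cdot,\cdot)_\sharp=(\cdot,\cdot)$ and $W_\sharp=V^h$. Assumption $(\mathfrak A)$: $|\vec X^m_\rho|>0$ a.e. on $I$ and $\vec X^m(\rho)\cdot\vec e_1>0$ for all $\rho\in\overline I\setminus\partial_0I$. *)

From Stdlib Require Import Reals Lra Lia Classical ClassicalEpsilon.
Open Scope R_scope.

(* Riemann integral of f over [a,b] (0 if f is not Riemann integrable;
   all integrands below are piecewise polynomials, hence integrable). *)
Definition Rint (f : R -> R) (a b : R) : R :=
  match excluded_middle_informative (inhabited (Riemann_integrable f a b)) with
  | left H => RiemannInt (epsilon H (fun _ => True))
  | right _ => 0
  end.

Fixpoint sum1 (n : nat) (f : nat -> R) : R :=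
  match n with
  | O => 0
  | S k => sum1 k f + f (S k)
  end.

Definition vec := (R * R)%type.
Definition dot (a b : vec) : R := fst a * fst b + snd a * snd b.
Definition vnorm (a : vec) : R := sqrt (dot a a).
Definition vadd (a b : vec) : vec := (fst a + fst b, snd a + snd b).
Definition vsub (a b : vec) : vec := (fst a - fst b, snd a - snd b).
Definition vscale (c : R) (a : vec) : vec := (c * fst a, c * snd a).

(* Labels of the boundary partition  dI = d_D I u d_0 I u d_1 I u d_2 I *)
Inductive bclab := BD | B0 | B1 | B2.

(* A nodal function: its values at the nodes q_0,...,q_J
   (elements of V^h are determined by these values). *)
Definition nodal := nat -> R.
Definition vnodal := nat -> vec.
Definition c1 (V : vnodal) : nodal := fun j => fst (V j).
Definition c2 (V : vnodal) : nodal := fun j => snd (V j).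

Section FEM.
Variable J : nat.
(* periodic = true : I = R/Z ;  periodic = false : I = (0,1) *)
Variable periodic : bool.
(* label and rho-hat of the boundary points p = 0 (false) and p = 1 (true) *)
Variables lab0 lab1 : bclab.
Variables rho0 rho1 : R.

Definition h : R := / INR J.
Definition q (j : nat) : R := INR j * h.

(* restriction of the piecewise affine function with nodal values f to the
   element [q_{j-1}, q_j], j = 1..J, and its (constant) derivative there *)
Definition elt (f : nodal) (j : nat) (x : R) : R :=
  f (j - 1)%nat + (x - q (j - 1)) / h * (f j - f (j - 1)%nat).
Definition dlt (f : nodal) (j : nat) : R := (f j - f (j - 1)%nat) / h.
Definition velt (V : vnodal) (j : nat) (x : R) : vec :=
  (elt (c1 V) j x, elt (c2 V) j x).
Definition vdlt (V : vnodal) (j : nat) : vec := (dlt (c1 V) j, dlt (c2 V) j).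
Definition nrm (V : vnodal) (j : nat) : R := vnorm (vdlt V j).

(* Piecewise continuous functions are given element-wise: F j is the
   (continuous) restriction to [q_{j-1},q_j]. *)
Definition pint (F : nat -> R -> R) : R :=
  sum1 J (fun j => Rint (F j) (q (j - 1)) (q j)).
(* mass lumped integral: (f,g)^h = h/2 sum_j [(fg)(q_j^-) + (fg)(q_{j-1}^+)] *)
Definition lint (F : nat -> R -> R) : R :=
  h / 2 * sum1 J (fun j => F j (q j) + F j (q (j - 1))).
Definition ipS (lumped : bool) (F : nat -> R -> R) : R :=
  if lumped then lint F else pint F.

Definition labp (p : bool) : bclab := if p then lab1 else lab0.
Definition rhop (p : bool) : R := if p then rho1 else rho0.
Definition bnode (p : bool) : nat := if p then J else O.
Definition bpoint (p : bool) : R := if p then 1 else 0.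

(* membership in V^h (periodicity: q_J identified with q_0) *)
Definition inVh_s (f : nodal) : Prop := periodic = true -> f J = f O.
Definition inVh (V : vnodal) : Prop := periodic = true -> V J = V O.
Definition inV0 (V : vnodal) : Prop :=
  inVh V /\
  forall p : bool, periodic = false -> labp p = B0 -> fst (V (bnode p)) = 0.
Definition inVD (V : vnodal) : Prop :=
  inV0 V /\
  forall p : bool, periodic = false ->
    (labp p = B1 -> fst (V (bnode p)) = 0) /\
    (labp p = B2 -> snd (V (bnode p)) = 0) /\
    (labp p = BD -> V (bnode p) = (0, 0)).
Definition inW0 (f : nodal) : Prop :=
  inVh_s f /\ forall p : bool, periodic = false -> labp p = B0 -> f (bnode p) = 0.
Definition inWs (lumped : bool) (f : nodal) : Prop :=
  if lumped then inW0 f else inVh_s f.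
Definition inWs2 (lumped : bool) (V : vnodal) : Prop :=
  inWs lumped (c1 V) /\ inWs lumped (c2 V).

(* Assumption (A): |X_rho| > 0 a.e. (X_rho is constant on each element) and
   X(rho).e1 > 0 for all rho in closure(I) \ d_0 I. *)
Definition assumpA (X : vnodal) : Prop :=
  (forall j, (1 <= j <= J)%nat -> nrm X j > 0) /\
  (forall (j : nat) (x : R), (1 <= j <= J)%nat -> q (j - 1) <= x <= q j ->
     (forall p : bool, periodic = false -> labp p = B0 -> x <> bpoint p) ->
     elt (c1 X) j x > 0).

(* sum_{i=1}^2 sum_{p in d_i I} rho_p (X(p).e1) eta(p).e_{3-i} : contribution of p *)
Definition bterm (X eta : vnodal) (p : bool) : R :=
  if periodic then 0 else
  match labp p with
  | B1 => rhop p * fst (X (bnode p)) * snd (eta (bnode p))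
  | B2 => rhop p * fst (X (bnode p)) * fst (eta (bnode p))
  | _ => 0
  end.

Definition scheme (lumped : bool) (dt : R) (X dX K : vnodal) : Prop :=
  let Xn : vnodal := fun j => vadd (X j) (dX j) in
  inVD dX /\ inWs2 lumped K /\
  (forall chi : vnodal, inWs2 lumped chi ->
     ipS lumped (fun j x => elt (c1 X) j x *
        dot (vscale (/ dt) (vsub (velt Xn j x) (velt X j x))) (velt chi j x) * nrm X j)
     = ipS lumped (fun j x => elt (c1 X) j x * dot (velt K j x) (velt chi j x) * nrm X j)) /\
  (forall eta : vnodal, inVD eta ->
     ipS lumped (fun j x => elt (c1 X) j x * dot (velt K j x) (velt eta j x) * nrm X j)
     + pint (fun j x => elt (c1 eta) j x * nrm X j)
     + pint (fun j x => elt (c1 X) j x * dot (vdlt Xn j) (vdlt eta j) * / nrm X j)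
     = - (bterm X eta false + bterm X eta true)).

End FEM.

(* Testing the first equation with the defect
   dX/dt - kappa (masked on d_0 I in the lumped variant) shows that kappa is determined
   by dX: kappa = dX/dt at the nodes, except that in the lumped variant it vanishes on
   d_0 I, where the weight X.e1 does.  Eliminating kappa, the second equation reads
   B(dX, eta) = l(eta) for all eta in V_d, with
     B(u, eta) = (X.e1 kappa(u), eta |X_rho|)_# + (X.e1 u_rho, eta_rho / |X_rho|).
   All integrands are cubic on each element, so Simpson's rule (or mass lumping) is exact;
   since X.e1 > 0 at every element midpoint and at every node off d_0 I, B(u, u) = 0 forces
   u_rho = 0 and u(q_1) = 0, i.e. u = 0.  A bilinear form on a finite-dimensional space with
   B(u, u) <> 0 for u <> 0 represents every linear functional; this gives existence, and
   uniqueness of dX follows from B(u, u) = 0. *)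

From Stdlib Require Import Reals Lra Lia FunctionalExtensionality List ClassicalEpsilon.
From Coquelicot Require Import Coquelicot.
Open Scope R_scope.

(** * Cubic polynomials and Simpson's rule *)

Definition deg_le0 (f : R -> R) := exists a, forall x, f x = a.
Definition deg_le1 (f : R -> R) := exists a b, forall x, f x = a + b * x.
Definition deg_le2 (f : R -> R) := exists a b c, forall x, f x = a + b * x + c * x ^ 2.
Definition deg_le3 (f : R -> R) :=
  exists a b c d, forall x, f x = a + b * x + c * x ^ 2 + d * x ^ 3.

Lemma Rint_RInt f a b : ex_RInt f a b -> Rint f a b = RInt f a b.
Proof.
  intros Hf. unfold Rint. destruct (excluded_middle_informative _) as [H | H].
  - now rewrite (RInt_Reals f a b (epsilon H (fun _ => True))).
  - exfalso. apply H. constructor. now apply ex_RInt_Reals_0.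
Qed.

Lemma Rint_simpson f a b :
  deg_le3 f -> Rint f a b = (b - a) / 6 * (f a + 4 * f ((a + b) / 2) + f b).
Proof.
  intros (c0 & c1 & c2 & c3 & Hf).
  replace f with (fun x => c0 + c1 * x + c2 * x ^ 2 + c3 * x ^ 3)
    by (apply functional_extensionality; intro; now rewrite Hf).
  set (F := fun x => c0 * x + c1 * x ^ 2 / 2 + c2 * x ^ 3 / 3 + c3 * x ^ 4 / 4).
  assert (HF : is_RInt (fun x => c0 + c1 * x + c2 * x ^ 2 + c3 * x ^ 3) a b (minus (F b) (F a))).
  { apply (is_RInt_derive F).
    - intros x _. unfold F. auto_derive; [easy | simpl; field].
    - intros x _. apply continuity_pt_filterlim. reg. }
  rewrite Rint_RInt by (eexists; exact HF).
  rewrite (is_RInt_unique _ _ _ _ HF). unfold F, minus, plus, opp; simpl. field.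
Qed.

Lemma deg_le0_le1 f : deg_le0 f -> deg_le1 f.
Proof. intros [a H]. exists a, 0. intro x. rewrite H. ring. Qed.
Lemma deg_le1_le2 f : deg_le1 f -> deg_le2 f.
Proof. intros (a & b & H). exists a, b, 0. intro x. rewrite H. ring. Qed.
Lemma deg_le2_le3 f : deg_le2 f -> deg_le3 f.
Proof. intros (a & b & c & H). exists a, b, c, 0. intro x. rewrite H. ring. Qed.

Lemma deg_le0_const a : deg_le0 (fun _ => a).
Proof. now exists a. Qed.
Lemma deg_le1_id : deg_le1 (fun x => x).
Proof. exists 0, 1. intro; ring. Qed.

Lemma deg_le1_plus f g : deg_le1 f -> deg_le1 g -> deg_le1 (fun x => f x + g x).
Proof. intros (a & b & H) (a' & b' & H'). exists (a + a'), (b + b'). intro x. rewrite H, H'. ring. Qed.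
Lemma deg_le2_plus f g : deg_le2 f -> deg_le2 g -> deg_le2 (fun x => f x + g x).
Proof.
  intros (a & b & c & H) (a' & b' & c' & H'). exists (a + a'), (b + b'), (c + c').
  intro x. rewrite H, H'. ring.
Qed.
Lemma deg_le3_lincomb a b f g : deg_le3 f -> deg_le3 g -> deg_le3 (fun x => a * f x + b * g x).
Proof.
  intros (c0 & c1 & c2 & c3 & H) (d0 & d1 & d2 & d3 & H').
  exists (a * c0 + b * d0), (a * c1 + b * d1), (a * c2 + b * d2), (a * c3 + b * d3).
  intro x. rewrite H, H'. ring.
Qed.
Lemma deg_le1_minus f g : deg_le1 f -> deg_le1 g -> deg_le1 (fun x => f x - g x).
Proof. intros (a & b & H) (a' & b' & H'). exists (a - a'), (b - b'). intro x. rewrite H, H'. ring. Qed.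

Lemma deg_le1_mult_const f g : deg_le1 f -> deg_le0 g -> deg_le1 (fun x => f x * g x).
Proof. intros (a & b & H) (k & H'). exists (a * k), (b * k). intro x. rewrite H, H'. ring. Qed.
Lemma deg_le1_const_mult f g : deg_le0 f -> deg_le1 g -> deg_le1 (fun x => f x * g x).
Proof. intros (k & H) (a & b & H'). exists (k * a), (k * b). intro x. rewrite H, H'. ring. Qed.
Lemma deg_le3_mult_const f g : deg_le3 f -> deg_le0 g -> deg_le3 (fun x => f x * g x).
Proof.
  intros (a & b & c & d & H) (k & H'). exists (a * k), (b * k), (c * k), (d * k).
  intro x. rewrite H, H'. ring.
Qed.
Lemma deg_le2_mult f g : deg_le1 f -> deg_le1 g -> deg_le2 (fun x => f x * g x).
Proof.
  intros (a & b & H) (a' & b' & H'). exists (a * a'), (a * b' + b * a'), (b * b').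
  intro x. rewrite H, H'. ring.
Qed.
Lemma deg_le3_mult f g : deg_le1 f -> deg_le2 g -> deg_le3 (fun x => f x * g x).
Proof.
  intros (a & b & H) (a' & b' & c' & H').
  exists (a * a'), (a * b' + b * a'), (a * c' + b * b'), (b * c'). intro x. rewrite H, H'. ring.
Qed.

Ltac solve_deg :=
  match goal with
  | |- deg_le0 _ => apply deg_le0_const
  | |- deg_le1 _ =>
      first [ apply deg_le1_id
            | solve [apply deg_le0_le1; solve_deg]
            | solve [apply deg_le1_plus; solve_deg] | solve [apply deg_le1_minus; solve_deg]
            | solve [apply deg_le1_const_mult; solve_deg]
            | solve [apply deg_le1_mult_const; solve_deg] ]
  | |- deg_le2 _ =>
      first [ solve [apply deg_le1_le2; solve_deg]
            | solve [apply deg_le2_plus; solve_deg] | solve [apply deg_le2_mult; solve_deg] ]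
  | |- deg_le3 _ =>
      first [ solve [apply deg_le2_le3; solve_deg]
            | solve [apply deg_le3_mult; solve_deg] | solve [apply deg_le3_mult_const; solve_deg] ]
  end.

Lemma sum1_ext n f g : (forall j, (1 <= j <= n)%nat -> f j = g j) -> sum1 n f = sum1 n g.
Proof.
  induction n as [| n IH]; intros H; simpl; [easy |].
  f_equal; [apply IH; intros; apply H | apply H]; lia.
Qed.
Lemma sum1_plus n f g : sum1 n (fun j => f j + g j) = sum1 n f + sum1 n g.
Proof. induction n as [| n IH]; simpl; [ring |]. rewrite IH. ring. Qed.
Lemma sum1_scal n c f : sum1 n (fun j => c * f j) = c * sum1 n f.
Proof. induction n as [| n IH]; simpl; [ring |]. rewrite IH. ring. Qed.
Lemma sum1_nonneg n f : (forall j, (1 <= j <= n)%nat -> 0 <= f j) -> 0 <= sum1 n f.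
Proof.
  induction n as [| n IH]; intros H; simpl; [lra |].
  pose proof (H (S n) ltac:(lia)). pose proof (IH ltac:(intros; apply H; lia)). lra.
Qed.
Lemma sum1_eq0_nonneg n f : (forall j, (1 <= j <= n)%nat -> 0 <= f j) -> sum1 n f = 0 ->
  forall j, (1 <= j <= n)%nat -> f j = 0.
Proof.
  induction n as [| n IH]; intros H H0 j Hj; [lia |]. simpl in H0.
  pose proof (H (S n) ltac:(lia)). pose proof (sum1_nonneg n f ltac:(intros; apply H; lia)).
  destruct (Nat.eq_dec j (S n)) as [-> | Hne]; [lra |].
  apply IH; [intros; apply H; lia | lra | lia].
Qed.

Lemma Rmult3_nonneg a b c : 0 <= a -> 0 <= b -> 0 <= c -> 0 <= a * b * c.
Proof. intros. repeat apply Rmult_le_pos; easy. Qed.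

Lemma Rmult3_eq0_mid a b c : 0 < a -> 0 < c -> a * b * c = 0 -> b = 0.
Proof.
  intros Ha Hc E. apply Rmult_integral in E as [E | E]; [| lra].
  apply Rmult_integral in E as [E | E]; [lra | easy].
Qed.

(** * Representing linear functionals by a definite bilinear form *)

Section FiniteRepresentation.

Variables (V : Type) (add : V -> V -> V) (scal : R -> V -> V) (zero : V).
Hypothesis scal_zero : scal 0 zero = zero.

Fixpoint comb (l : list V) (c : nat -> R) : V :=
  match l with
  | nil => zero
  | e :: l' => add (scal (c O) e) (comb l' (fun i => c (S i)))
  end.

Definition additive (L : V -> R) := forall u w, L (add u w) = L u + L w.
Definition homogeneous (L : V -> R) := forall c u, L (scal c u) = c * L u.

Variable B : V -> V -> R.
Variable null : V -> Prop.
Hypothesis B_additive_l : forall v, additive (fun u => B u v).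
Hypothesis B_homogeneous_l : forall v, homogeneous (fun u => B u v).
Hypothesis B_additive_r : forall u, additive (B u).
Hypothesis B_homogeneous_r : forall u, homogeneous (B u).
Hypothesis B_null_r : forall u v, null v -> B u v = 0.
Hypothesis B_definite : forall v, B v v = 0 -> null v.

Lemma B_zero_l v : B zero v = 0.
Proof. rewrite <- scal_zero, B_homogeneous_l. ring. Qed.

Lemma comb_scal_plus l a b s v :
  B (comb l (fun i => a i + s * b i)) v = B (comb l a) v + s * B (comb l b) v.
Proof.
  revert a b. induction l as [| e l IH]; intros a b; simpl.
  - rewrite B_zero_l. ring.
  - rewrite !B_additive_l, !B_homogeneous_l, (IH (fun i => a (S i)) (fun i => b (S i))). ring.
Qed.

Lemma comb_agree (L : V -> R) u l c : additive L -> homogeneous L ->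
  (forall v, In v l -> B u v = L v) -> B u (comb l c) = L (comb l c).
Proof.
  intros La Lh. revert c. induction l as [| e l IH]; intros c H; simpl.
  - rewrite <- scal_zero, B_homogeneous_r, Lh. ring.
  - rewrite B_additive_r, B_homogeneous_r, La, Lh, IH, H by first [now left | intros; apply H; now right].
    ring.
Qed.

(* Induction on [l]: the representer of [L] on [l] is corrected along the component
   [e - w] of the new vector [e] that is [B]-orthogonal to [l]. *)
Lemma comb_represents l (L : V -> R) : additive L -> homogeneous L ->
  (forall v, null v -> L v = 0) -> exists c, forall v, In v l -> B (comb l c) v = L v.
Proof.
  revert L. induction l as [| e l IH]; intros L La Lh Ln.
  - exists (fun _ => 0). intros v [].
  - destruct (IH L La Lh Ln) as [a Ha].
    destruct (IH (B e) (B_additive_r e) (B_homogeneous_r e) (fun v => B_null_r e v)) as [d Hd].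
    set (u := comb l a) in *. set (w := comb l d) in *.
    set (z := add e (scal (-1) w)).
    assert (Hz : forall v, B z v = B e v - B w v)
      by (intro v; unfold z; rewrite B_additive_l, B_homogeneous_l; ring).
    assert (Hzl : forall v, In v l -> B z v = 0) by (intros v Hv; rewrite Hz, Hd by exact Hv; ring).
    assert (Hzz : B z z = B z e).
    { assert (Hzw : B z w = 0).
      { apply (comb_agree (fun _ => 0)); [intros ? ?; ring | intros ? ?; ring | exact Hzl]. }
      unfold z at 2. rewrite B_additive_r, B_homogeneous_r, Hzw. ring. }
    destruct (Req_dec (B z z) 0) as [H0 | H0].
    + exists (fun i => match i with O => 0 | S i => a i end).
      intros v Hv; simpl. rewrite B_additive_l, B_homogeneous_l.
      change (comb l (fun i => a i)) with u. destruct Hv as [<- | Hv].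
      * assert (E1 : B u z = 0) by (apply B_null_r, B_definite, H0).
        assert (E2 : L z = 0) by (apply Ln, B_definite, H0).
        assert (E3 : B u w = L w) by (apply comb_agree; auto).
        unfold z in E1, E2. rewrite B_additive_r, B_homogeneous_r in E1. rewrite La, Lh in E2. lra.
      * rewrite Ha by exact Hv. ring.
    + set (t := (L e - B u e) / B z z).
      exists (fun i => match i with O => t | S i => a i + - t * d i end).
      intros v Hv; simpl. rewrite B_additive_l, B_homogeneous_l, comb_scal_plus. fold u w.
      destruct Hv as [<- | Hv].
      * transitivity (B u e + t * B z z); [rewrite Hzz, Hz; ring |]. unfold t. field. exact H0.
      * rewrite Ha, Hd by exact Hv. ring.
Qed.

Lemma finite_dim_representation (P : V -> Prop) l (L : V -> R) :
  additive L -> homogeneous L -> (forall v, null v -> L v = 0) ->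
  (forall v, P v -> exists c r, null r /\ v = add (comb l c) r) ->
  exists c, forall v, P v -> B (comb l c) v = L v.
Proof.
  intros La Lh Ln Hspan. destruct (comb_represents l L La Lh Ln) as [c Hc].
  exists c. intros v Hv. destruct (Hspan v Hv) as (c' & r & Hr & ->).
  rewrite B_additive_r, La, (B_null_r _ _ Hr), (Ln _ Hr), (comb_agree L _ l c' La Lh Hc).
  ring.
Qed.

End FiniteRepresentation.

(** * Piecewise affine functions on the mesh *)

Lemma vec_ext (a b : vec) : fst a = fst b -> snd a = snd b -> a = b.
Proof. destruct a, b; simpl; intros -> ->; easy. Qed.

Lemma dot_vadd_l a b c : dot (vadd a b) c = dot a c + dot b c.
Proof. unfold dot, vadd; simpl; ring. Qed.
Lemma dot_vadd_r a b c : dot c (vadd a b) = dot c a + dot c b.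
Proof. unfold dot, vadd; simpl; ring. Qed.
Lemma dot_vscale_l k a c : dot (vscale k a) c = k * dot a c.
Proof. unfold dot, vscale; simpl; ring. Qed.
Lemma dot_vscale_r k a c : dot c (vscale k a) = k * dot c a.
Proof. unfold dot, vscale; simpl; ring. Qed.
Lemma dot_0_r a : dot a (0, 0) = 0.
Proof. unfold dot; simpl; ring. Qed.
Lemma dot_self_nonneg a : 0 <= dot a a.
Proof. unfold dot. nra. Qed.
Lemma dot_self_eq0 a : dot a a = 0 -> a = (0, 0).
Proof. unfold dot. destruct a as [a b]; simpl. intros. apply vec_ext; simpl; nra. Qed.

Lemma vmid_eq0_iff a b : vscale (/ 2) (vadd a b) = (0, 0) -> (a = (0, 0) <-> b = (0, 0)).
Proof.
  destruct a as [a1 a2], b as [b1 b2]. unfold vscale, vadd. simpl. intros E. injection E as E1 E2.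
  split; intros E; injection E as E3 E4; apply vec_ext; simpl; lra.
Qed.

Definition vnadd (u w : vnodal) : vnodal := fun k => vadd (u k) (w k).
Definition vnscale (c : R) (u : vnodal) : vnodal := fun k => vscale c (u k).
Definition vnzero : vnodal := fun _ => (0, 0).

Lemma vnscale_0_vnzero : vnscale 0 vnzero = vnzero.
Proof. apply functional_extensionality; intro k. unfold vnzero, vnscale, vscale. f_equal; ring. Qed.

Section Mesh.

Variable J : nat.
Hypothesis HJ : (1 <= J)%nat.

Lemma h_pos : 0 < h J.
Proof. apply Rinv_0_lt_compat, lt_0_INR. lia. Qed.

Lemma q_succ j : (1 <= j)%nat -> q J j - q J (j - 1) = h J.
Proof. intros Hj. unfold q. destruct j as [| j]; [lia |]. rewrite Nat.sub_1_r, S_INR. simpl. ring. Qed.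

Lemma q_nonneg k : 0 <= q J k.
Proof. pose proof (pos_INR k). pose proof h_pos. unfold q. nra. Qed.

Lemma q_le_1 k : (k <= J)%nat -> q J k <= 1.
Proof.
  intros Hk. apply le_INR in Hk. pose proof (lt_0_INR J ltac:(lia)). unfold q, h.
  apply (Rmult_le_reg_r (INR J)); [easy |]. rewrite Rmult_assoc, Rinv_l by lra. lra.
Qed.

Lemma q_0 : q J 0 = 0.
Proof. unfold q. simpl. ring. Qed.

Lemma q_J : q J J = 1.
Proof. pose proof (lt_0_INR J ltac:(lia)). unfold q, h. field. lra. Qed.

Lemma q_inj k k' : q J k = q J k' -> k = k'.
Proof. unfold q. intros E. pose proof h_pos. apply INR_eq, (Rmult_eq_reg_r (h J)); lra. Qed.

Definition mid j := (q J (j - 1) + q J j) / 2.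

Lemma elt_left f j : elt J f j (q J (j - 1)) = f (j - 1)%nat.
Proof. unfold elt, Rdiv. ring. Qed.

Lemma elt_right f j : (1 <= j)%nat -> elt J f j (q J j) = f j.
Proof. intros Hj. pose proof h_pos. unfold elt. rewrite q_succ by easy. field. lra. Qed.

Lemma elt_mid f j : (1 <= j)%nat -> elt J f j (mid j) = (f (j - 1)%nat + f j) / 2.
Proof.
  intros Hj. pose proof h_pos. pose proof (q_succ j Hj). unfold elt, mid.
  replace ((q J (j - 1) + q J j) / 2 - q J (j - 1)) with (h J / 2) by lra. field. lra.
Qed.

Lemma pint_simpson F : (forall j, deg_le3 (F j)) ->
  pint J F = sum1 J (fun j => h J / 6 * (F j (q J (j - 1)) + 4 * F j (mid j) + F j (q J j))).
Proof.
  intros HF. apply sum1_ext. intros j Hj. rewrite Rint_simpson, q_succ by (easy || lia). easy.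
Qed.

Lemma pint_ext F G : (forall j, (1 <= j <= J)%nat -> forall x, F j x = G j x) -> pint J F = pint J G.
Proof.
  intros H. apply sum1_ext. intros j Hj. f_equal. apply functional_extensionality. auto.
Qed.

Lemma ipS_ext lumped F G : (forall j, (1 <= j <= J)%nat -> forall x, F j x = G j x) ->
  ipS J lumped F = ipS J lumped G.
Proof.
  intros H. destruct lumped; simpl; [| now apply pint_ext].
  unfold lint. f_equal. apply sum1_ext. intros j Hj. now rewrite !H.
Qed.

Lemma pint_lincomb F G1 G2 a b :
  (forall j, deg_le3 (G1 j)) -> (forall j, deg_le3 (G2 j)) ->
  (forall j x, F j x = a * G1 j x + b * G2 j x) -> pint J F = a * pint J G1 + b * pint J G2.
Proof.
  intros H1 H2 E.
  replace F with (fun j x => a * G1 j x + b * G2 j x)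
    by (do 2 (apply functional_extensionality; intro); now rewrite E).
  rewrite !pint_simpson by (easy || intro j; now apply deg_le3_lincomb).
  rewrite <- !sum1_scal, <- sum1_plus. apply sum1_ext. intros; ring.
Qed.

Lemma lint_lincomb F G1 G2 a b :
  (forall j x, F j x = a * G1 j x + b * G2 j x) -> lint J F = a * lint J G1 + b * lint J G2.
Proof.
  intros E. unfold lint.
  replace (a * (h J / 2 * _) + b * (h J / 2 * _))
    with (h J / 2 * (a * sum1 J (fun j => G1 j (q J j) + G1 j (q J (j - 1)))
                     + b * sum1 J (fun j => G2 j (q J j) + G2 j (q J (j - 1))))) by ring.
  f_equal. rewrite <- !sum1_scal, <- sum1_plus. apply sum1_ext. intros. rewrite !E. ring.
Qed.

Lemma ipS_lincomb lumped F G1 G2 a b :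
  (forall j, deg_le3 (G1 j)) -> (forall j, deg_le3 (G2 j)) ->
  (forall j x, F j x = a * G1 j x + b * G2 j x) ->
  ipS J lumped F = a * ipS J lumped G1 + b * ipS J lumped G2.
Proof. destruct lumped; simpl; intros. - now apply lint_lincomb. - now apply pint_lincomb. Qed.

Lemma ipS_zero lumped F : (forall j, (1 <= j <= J)%nat -> forall x, F j x = 0) -> ipS J lumped F = 0.
Proof.
  intros H. rewrite (ipS_ext lumped F (fun _ _ => 0 * 0)) by (intros; rewrite H by easy; ring).
  rewrite (ipS_lincomb lumped _ (fun _ _ => 0) (fun _ _ => 0) 0 0); try intros; try ring.
  all: exists 0, 0, 0, 0; intro; ring.
Qed.

Lemma pint_zero F : (forall j, (1 <= j <= J)%nat -> forall x, F j x = 0) -> pint J F = 0.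
Proof. exact (ipS_zero false F). Qed.

Lemma pint_nonneg F : (forall j, deg_le3 (F j)) ->
  (forall j, (1 <= j <= J)%nat -> 0 <= F j (q J (j - 1)) /\ 0 <= F j (mid j) /\ 0 <= F j (q J j)) ->
  0 <= pint J F.
Proof.
  intros HF H. pose proof h_pos. rewrite pint_simpson by easy. apply sum1_nonneg.
  intros j Hj. destruct (H j Hj) as (? & ? & ?). apply Rmult_le_pos; lra.
Qed.

Lemma pint_eq0_inv F : (forall j, deg_le3 (F j)) ->
  (forall j, (1 <= j <= J)%nat -> 0 <= F j (q J (j - 1)) /\ 0 <= F j (mid j) /\ 0 <= F j (q J j)) ->
  pint J F = 0 ->
  forall j, (1 <= j <= J)%nat -> F j (q J (j - 1)) = 0 /\ F j (mid j) = 0 /\ F j (q J j) = 0.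
Proof.
  intros HF H H0 j Hj. pose proof h_pos. rewrite pint_simpson in H0 by easy.
  apply (sum1_eq0_nonneg J) with (j := j) in H0; try easy.
  - destruct (H j Hj) as (? & ? & ?). apply Rmult_integral in H0. lra.
  - intros i Hi. destruct (H i Hi) as (? & ? & ?). apply Rmult_le_pos; lra.
Qed.

Lemma lint_nonneg F :
  (forall j, (1 <= j <= J)%nat -> 0 <= F j (q J (j - 1)) /\ 0 <= F j (q J j)) -> 0 <= lint J F.
Proof.
  intros H. pose proof h_pos. apply Rmult_le_pos; [lra |].
  apply sum1_nonneg. intros j Hj. destruct (H j Hj). lra.
Qed.

Lemma lint_eq0_inv F :
  (forall j, (1 <= j <= J)%nat -> 0 <= F j (q J (j - 1)) /\ 0 <= F j (q J j)) -> lint J F = 0 ->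
  forall j, (1 <= j <= J)%nat -> F j (q J (j - 1)) = 0 /\ F j (q J j) = 0.
Proof.
  intros H H0 j Hj. pose proof h_pos. unfold lint in H0.
  apply Rmult_integral in H0 as [? | H0]; [lra |].
  apply (sum1_eq0_nonneg J) with (j := j) in H0; try easy.
  - destruct (H j Hj). lra.
  - intros i Hi. destruct (H i Hi). lra.
Qed.

Lemma velt_left V j : velt J V j (q J (j - 1)) = V (j - 1)%nat.
Proof. unfold velt. rewrite !elt_left. unfold c1, c2. now destruct (V (j - 1)%nat). Qed.
Lemma velt_right V j : (1 <= j)%nat -> velt J V j (q J j) = V j.
Proof. intros. unfold velt. rewrite !elt_right by easy. unfold c1, c2. now destruct (V j). Qed.
Lemma velt_mid V j : (1 <= j)%nat -> velt J V j (mid j) = vscale (/ 2) (vadd (V (j - 1)%nat) (V j)).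
Proof. intros. unfold velt. rewrite !elt_mid by easy. apply vec_ext; simpl; unfold c1, c2; field. Qed.

End Mesh.

Lemma velt_vnadd J u w j x : velt J (vnadd u w) j x = vadd (velt J u j x) (velt J w j x).
Proof. apply vec_ext; simpl; unfold elt, c1, c2, Rdiv; simpl; ring. Qed.
Lemma velt_vnscale J c u j x : velt J (vnscale c u) j x = vscale c (velt J u j x).
Proof. apply vec_ext; simpl; unfold elt, c1, c2, Rdiv; simpl; ring. Qed.
Lemma vdlt_vnadd J u w j : vdlt J (vnadd u w) j = vadd (vdlt J u j) (vdlt J w j).
Proof. apply vec_ext; simpl; unfold dlt, c1, c2, Rdiv; simpl; ring. Qed.
Lemma vdlt_vnscale J c u j : vdlt J (vnscale c u) j = vscale c (vdlt J u j).
Proof. apply vec_ext; simpl; unfold dlt, c1, c2, Rdiv; simpl; ring. Qed.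

Lemma elt_ext J f g j x : f (j - 1)%nat = g (j - 1)%nat -> f j = g j -> elt J f j x = elt J g j x.
Proof. intros E1 E2. unfold elt. now rewrite E1, E2. Qed.
Lemma velt_ext J U V j x : U (j - 1)%nat = V (j - 1)%nat -> U j = V j -> velt J U j x = velt J V j x.
Proof. intros E1 E2. unfold velt, elt, c1, c2. now rewrite E1, E2. Qed.
Lemma vdlt_ext J U V j : U (j - 1)%nat = V (j - 1)%nat -> U j = V j -> vdlt J U j = vdlt J V j.
Proof. intros E1 E2. unfold vdlt, dlt, c1, c2. now rewrite E1, E2. Qed.

(** * Well-posedness of the scheme *)

Local Open Scope bool_scope.

Definition is_B0 (l : bclab) : bool := match l with B0 => true | _ => false end.

Lemma is_B0_spec l : is_B0 l = true <-> l = B0.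
Proof. destruct l; simpl; split; congruence. Qed.

Local Notation vcomb := (comb vnodal vnadd vnscale vnzero).

Section Scheme.

Variables (J : nat) (periodic : bool) (lab0 lab1 : bclab) (rho0 rho1 : R) (lumped : bool).
Variables (X : vnodal) (dt : R).
Hypothesis HJ : (2 <= J)%nat.
Hypothesis HX0 : inV0 J periodic lab0 lab1 X.
Hypothesis HA : assumpA J periodic lab0 lab1 X.
Hypothesis Hdt : 0 < dt.

Let HJ1 : (1 <= J)%nat. Proof. lia. Qed.

Local Notation VD := (inVD J periodic lab0 lab1).

Definition axis_node (k : nat) : bool :=
  negb periodic && ((Nat.eqb k 0 && is_B0 lab0) || (Nat.eqb k J && is_B0 lab1)).

Lemma axis_node_spec k : axis_node k = true ->
  periodic = false /\ exists p, k = bnode J p /\ labp lab0 lab1 p = B0.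
Proof.
  unfold axis_node. destruct periodic; [easy |]. simpl. intros H. split; [easy |].
  apply Bool.orb_prop in H as [H | H]; apply andb_prop in H as [Hk Hl];
    apply Nat.eqb_eq in Hk; apply is_B0_spec in Hl; [exists false | exists true]; easy.
Qed.

Lemma axis_node_bnode p : periodic = false -> labp lab0 lab1 p = B0 -> axis_node (bnode J p) = true.
Proof.
  intros Hp Hl. unfold axis_node. rewrite Hp.
  destruct p; simpl in *; rewrite Hl, ?Nat.eqb_refl; simpl; now rewrite ?Bool.orb_true_r.
Qed.

Lemma axis_node_periodic k : periodic = true -> axis_node k = false.
Proof. intros Hp. unfold axis_node. now rewrite Hp. Qed.

Lemma axis_node_1 : axis_node 1 = false.
Proof.
  unfold axis_node. replace (1 =? J)%nat with false by (symmetry; apply Nat.eqb_neq; lia).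
  simpl. now rewrite Bool.andb_false_r.
Qed.

Lemma axis_node_adjacent j : (1 <= j <= J)%nat -> axis_node (j - 1) = false \/ axis_node j = false.
Proof.
  intros Hj. destruct (axis_node (j - 1)) eqn:E1; [| now left].
  destruct (axis_node j) eqn:E2; [| now right].
  apply axis_node_spec in E1 as [_ [p1 [H1 _]]]. apply axis_node_spec in E2 as [_ [p2 [H2 _]]].
  destruct p1, p2; simpl in *; lia.
Qed.

Lemma nrm_pos j : (1 <= j <= J)%nat -> 0 < nrm J X j.
Proof. apply HA. Qed.

Lemma X1_node_pos k : (k <= J)%nat -> axis_node k = false -> 0 < fst (X k).
Proof.
  intros Hk Hax. pose proof (h_pos J HJ1).
  assert (Hoff : forall p, periodic = false -> labp lab0 lab1 p = B0 -> q J k <> bpoint p).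
  { intros p Hp Hl E. pose proof (axis_node_bnode p Hp Hl) as Hb.
    destruct p; simpl in E; [rewrite <- (q_J J HJ1) in E | rewrite <- (q_0 J) in E];
      apply q_inj in E; subst; simpl in Hb; congruence. }
  destruct k as [| k].
  - change (fst (X 0%nat)) with (c1 X (1 - 1)%nat). rewrite <- (elt_left J (c1 X) 1).
    apply HA; [lia | | easy].
    pose proof (q_succ J HJ1 1 ltac:(lia)). simpl in *. lra.
  - change (fst (X (S k))) with (c1 X (S k)). rewrite <- (elt_right J HJ1 (c1 X) (S k)) by lia.
    apply HA; [lia | | easy].
    pose proof (q_succ J HJ1 (S k) ltac:(lia)). lra.
Qed.

Lemma X1_axis_node k : axis_node k = true -> fst (X k) = 0.
Proof. intros H. apply axis_node_spec in H as [Hp [p [-> Hl]]]. now apply HX0. Qed.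

Lemma X1_node_nonneg k : (k <= J)%nat -> 0 <= fst (X k).
Proof.
  intros Hk. destruct (axis_node k) eqn:E.
  - rewrite X1_axis_node by easy. lra.
  - left. now apply X1_node_pos.
Qed.

Lemma X1_mid_pos j : (1 <= j <= J)%nat -> 0 < elt J (c1 X) j (mid J j).
Proof.
  intros Hj. pose proof (q_succ J HJ1 j ltac:(lia)). pose proof (h_pos J HJ1).
  apply HA; [easy | unfold mid; lra |].
  intros p _ _ E. pose proof (q_nonneg J HJ1 (j - 1)). pose proof (q_le_1 J HJ1 j ltac:(lia)).
  unfold mid in E. destruct p; simpl in E; lra.
Qed.

Definition mask_axis (u : vnodal) : vnodal := fun k => if lumped && axis_node k then (0, 0) else u k.

(* The curvature that the first equation of the scheme forces on a given step [u]: in the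
   lumped variant it is only tested at nodes off [d_0 I], and [W^h_{d_0}] makes it vanish there. *)
Definition kappa_of (u : vnodal) : vnodal := mask_axis (vnscale (/ dt) u).

Lemma kappa_of_vnadd u w : kappa_of (vnadd u w) = vnadd (kappa_of u) (kappa_of w).
Proof.
  apply functional_extensionality; intro k. unfold kappa_of, mask_axis, vnadd, vnscale.
  destruct (lumped && axis_node k); apply vec_ext; simpl; ring.
Qed.

Lemma kappa_of_vnscale c u : kappa_of (vnscale c u) = vnscale c (kappa_of u).
Proof.
  apply functional_extensionality; intro k. unfold kappa_of, mask_axis, vnscale.
  destruct (lumped && axis_node k); apply vec_ext; simpl; ring.
Qed.

Lemma kappa_of_dot_nonneg u k : 0 <= dot (kappa_of u k) (u k).
Proof.
  unfold kappa_of, mask_axis, vnscale. destruct (lumped && axis_node k).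
  - unfold dot; simpl; lra.
  - rewrite dot_vscale_l. apply Rmult_le_pos; [left; now apply Rinv_0_lt_compat | apply dot_self_nonneg].
Qed.

Definition mass_term u v j x :=
  elt J (c1 X) j x * dot (velt J (kappa_of u) j x) (velt J v j x) * nrm J X j.
Definition stiff_term u v j x := elt J (c1 X) j x * dot (vdlt J u j) (vdlt J v j) * / nrm J X j.
Definition flux_term v j x := elt J (c1 v) j x * nrm J X j.
Definition boundary_sum v :=
  bterm J periodic lab0 lab1 rho0 rho1 X v false + bterm J periodic lab0 lab1 rho0 rho1 X v true.

(* Eliminating the curvature turns the second equation of the scheme into
   [bform dX eta = load eta] for all [eta] in [V_d]. *)
Definition bform u v := ipS J lumped (mass_term u v) + pint J (stiff_term u v).
Definition load v := - boundary_sum v - pint J (flux_term v) - pint J (stiff_term X v).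

Lemma mass_term_deg_le3 u v j : deg_le3 (mass_term u v j).
Proof. unfold mass_term, dot, velt. simpl. solve_deg. Qed.
Lemma stiff_term_deg_le3 u v j : deg_le3 (stiff_term u v j).
Proof. unfold stiff_term. solve_deg. Qed.
Lemma flux_term_deg_le3 v j : deg_le3 (flux_term v j).
Proof. unfold flux_term. solve_deg. Qed.

Lemma bform_lincomb u v u1 v1 u2 v2 a b :
  (forall j x, mass_term u v j x = a * mass_term u1 v1 j x + b * mass_term u2 v2 j x) ->
  (forall j x, stiff_term u v j x = a * stiff_term u1 v1 j x + b * stiff_term u2 v2 j x) ->
  bform u v = a * bform u1 v1 + b * bform u2 v2.
Proof.
  intros Hm Hs. unfold bform.
  rewrite (ipS_lincomb J HJ1 lumped _ _ _ a b (mass_term_deg_le3 u1 v1) (mass_term_deg_le3 u2 v2) Hm),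
    (pint_lincomb J HJ1 _ _ _ a b (stiff_term_deg_le3 u1 v1) (stiff_term_deg_le3 u2 v2) Hs).
  ring.
Qed.

Lemma bform_additive_l v : additive vnodal vnadd (fun u => bform u v).
Proof.
  intros u w. rewrite <- (Rmult_1_l (bform u v)), <- (Rmult_1_l (bform w v)).
  apply bform_lincomb; intros; unfold mass_term, stiff_term.
  - rewrite kappa_of_vnadd, velt_vnadd, dot_vadd_l. ring.
  - rewrite vdlt_vnadd, dot_vadd_l. ring.
Qed.

Lemma bform_homogeneous_l v : homogeneous vnodal vnscale (fun u => bform u v).
Proof.
  intros c u. rewrite <- (Rplus_0_r (c * _)), <- (Rmult_0_l (bform u v)).
  apply bform_lincomb; intros; unfold mass_term, stiff_term.
  - rewrite kappa_of_vnscale, velt_vnscale, dot_vscale_l. ring.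
  - rewrite vdlt_vnscale, dot_vscale_l. ring.
Qed.

Lemma bform_additive_r u : additive vnodal vnadd (bform u).
Proof.
  intros v w. rewrite <- (Rmult_1_l (bform u v)), <- (Rmult_1_l (bform u w)).
  apply bform_lincomb; intros; unfold mass_term, stiff_term.
  - rewrite velt_vnadd, dot_vadd_r. ring.
  - rewrite vdlt_vnadd, dot_vadd_r. ring.
Qed.

Lemma bform_homogeneous_r u : homogeneous vnodal vnscale (bform u).
Proof.
  intros c v. rewrite <- (Rplus_0_r (c * _)), <- (Rmult_0_l (bform u v)).
  apply bform_lincomb; intros; unfold mass_term, stiff_term.
  - rewrite velt_vnscale, dot_vscale_r. ring.
  - rewrite vdlt_vnscale, dot_vscale_r. ring.
Qed.

Lemma load_lincomb v v1 v2 a b :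
  boundary_sum v = a * boundary_sum v1 + b * boundary_sum v2 ->
  (forall j x, flux_term v j x = a * flux_term v1 j x + b * flux_term v2 j x) ->
  (forall j x, stiff_term X v j x = a * stiff_term X v1 j x + b * stiff_term X v2 j x) ->
  load v = a * load v1 + b * load v2.
Proof.
  intros Hb Hf Hs. unfold load.
  rewrite Hb, (pint_lincomb J HJ1 _ _ _ a b (flux_term_deg_le3 v1) (flux_term_deg_le3 v2) Hf),
    (pint_lincomb J HJ1 _ _ _ a b (stiff_term_deg_le3 X v1) (stiff_term_deg_le3 X v2) Hs).
  ring.
Qed.

Lemma load_additive : additive vnodal vnadd load.
Proof.
  intros v w. rewrite <- (Rmult_1_l (load v)), <- (Rmult_1_l (load w)).
  apply load_lincomb; intros.
  - unfold boundary_sum, bterm, vnadd, vadd. destruct periodic; [ring |].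
    destruct (labp lab0 lab1 false), (labp lab0 lab1 true); simpl; ring.
  - unfold flux_term, elt, c1, vnadd, vadd, Rdiv. simpl. ring.
  - unfold stiff_term. rewrite vdlt_vnadd, dot_vadd_r. ring.
Qed.

Lemma load_homogeneous : homogeneous vnodal vnscale load.
Proof.
  intros c v. rewrite <- (Rplus_0_r (c * _)), <- (Rmult_0_l (load v)).
  apply load_lincomb; intros.
  - unfold boundary_sum, bterm, vnscale, vscale. destruct periodic; [ring |].
    destruct (labp lab0 lab1 false), (labp lab0 lab1 true); simpl; ring.
  - unfold flux_term, elt, c1, vnscale, vscale, Rdiv. simpl. ring.
  - unfold stiff_term. rewrite vdlt_vnscale, dot_vscale_r. ring.
Qed.

(* Values beyond node [J] are never read, so [bform] is only definite modulo this. *)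
Definition nodal_zero (v : vnodal) := forall k, (k <= J)%nat -> v k = (0, 0).

Lemma nodal_zero_velt v j x : nodal_zero v -> (1 <= j <= J)%nat -> velt J v j x = (0, 0).
Proof.
  intros Hv Hj. rewrite (velt_ext J v vnzero) by (apply Hv; lia).
  apply vec_ext; simpl; unfold elt, c1, c2, Rdiv; simpl; ring.
Qed.

Lemma nodal_zero_vdlt v j : nodal_zero v -> (1 <= j <= J)%nat -> vdlt J v j = (0, 0).
Proof.
  intros Hv Hj. rewrite (vdlt_ext J v vnzero) by (apply Hv; lia).
  apply vec_ext; simpl; unfold dlt, c1, c2, Rdiv; simpl; ring.
Qed.

Lemma bform_nodal_zero_r u v : nodal_zero v -> bform u v = 0.
Proof.
  intros Hv. unfold bform.
  rewrite (ipS_zero J HJ1 lumped), (pint_zero J HJ1 (stiff_term u v)); [ring | |];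
    intros j Hj x; unfold mass_term, stiff_term.
  - rewrite (nodal_zero_vdlt v j), dot_0_r by easy. ring.
  - rewrite (nodal_zero_velt v j x), dot_0_r by easy. ring.
Qed.

Lemma load_nodal_zero v : nodal_zero v -> load v = 0.
Proof.
  intros Hv. unfold load.
  assert (Hb : boundary_sum v = 0).
  { unfold boundary_sum, bterm. destruct periodic; [ring |]. simpl.
    rewrite (Hv 0%nat), (Hv J) by lia. destruct lab0, lab1; simpl; ring. }
  rewrite Hb, (pint_zero J HJ1 (flux_term v)), (pint_zero J HJ1 (stiff_term X v)); [ring | |];
    intros j Hj x; unfold flux_term, stiff_term.
  - rewrite (nodal_zero_vdlt v j), dot_0_r by easy. ring.
  - rewrite (elt_ext J (c1 v) (c1 vnzero)) by (unfold c1; rewrite Hv by lia; easy).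
    unfold elt, c1, vnzero, Rdiv. simpl. ring.
Qed.

Lemma mass_term_nodes_nonneg u j : (1 <= j <= J)%nat ->
  0 <= mass_term u u j (q J (j - 1)) /\ 0 <= mass_term u u j (q J j).
Proof.
  intros Hj. pose proof (nrm_pos j Hj). unfold mass_term.
  rewrite elt_left, elt_right, !velt_left, !velt_right by lia.
  pose proof (kappa_of_dot_nonneg u (j - 1)). pose proof (kappa_of_dot_nonneg u j).
  pose proof (X1_node_nonneg (j - 1) ltac:(lia)). pose proof (X1_node_nonneg j ltac:(lia)).
  unfold c1. split; repeat apply Rmult_le_pos; lra.
Qed.

Lemma mass_term_simpson_nonneg u j : lumped = false -> (1 <= j <= J)%nat ->
  0 <= mass_term u u j (q J (j - 1)) /\ 0 <= mass_term u u j (mid J j) /\ 0 <= mass_term u u j (q J j).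
Proof.
  intros Hl Hj. destruct (mass_term_nodes_nonneg u j Hj). repeat split; try easy.
  pose proof (nrm_pos j Hj). pose proof (X1_mid_pos j Hj).
  unfold mass_term, kappa_of, mask_axis. rewrite Hl. simpl. fold (vnscale (/ dt) u).
  rewrite velt_vnscale, dot_vscale_l.
  pose proof (dot_self_nonneg (velt J u j (mid J j))). pose proof (Rinv_0_lt_compat _ Hdt).
  repeat apply Rmult_le_pos; lra.
Qed.

Lemma mass_nonneg u : 0 <= ipS J lumped (mass_term u u).
Proof.
  destruct lumped eqn:Hl; simpl.
  - apply (lint_nonneg J HJ1). apply mass_term_nodes_nonneg.
  - apply (pint_nonneg J HJ1); [apply mass_term_deg_le3 |].
    intros j Hj. now apply mass_term_simpson_nonneg.
Qed.

Lemma mass_eq0_inv u : ipS J lumped (mass_term u u) = 0 ->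
  forall j, (1 <= j <= J)%nat -> mass_term u u j (q J j) = 0.
Proof.
  intros H0 j Hj. destruct lumped eqn:Hl; simpl in H0.
  - now apply (lint_eq0_inv J HJ1 _ (mass_term_nodes_nonneg u)).
  - refine (proj2 (proj2 (pint_eq0_inv J HJ1 _ (mass_term_deg_le3 u u) _ H0 j Hj))).
    intros i Hi. now apply mass_term_simpson_nonneg.
Qed.

Lemma stiff_term_simpson_nonneg u j : (1 <= j <= J)%nat ->
  0 <= stiff_term u u j (q J (j - 1)) /\ 0 <= stiff_term u u j (mid J j) /\ 0 <= stiff_term u u j (q J j).
Proof.
  intros Hj. pose proof (Rinv_0_lt_compat _ (nrm_pos j Hj)).
  pose proof (dot_self_nonneg (vdlt J u j)). pose proof (X1_mid_pos j Hj).
  pose proof (X1_node_nonneg (j - 1) ltac:(lia)). pose proof (X1_node_nonneg j ltac:(lia)).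
  unfold stiff_term. rewrite elt_left, elt_right by lia. unfold c1 in *.
  repeat split; repeat apply Rmult_le_pos; lra.
Qed.

Lemma stiff_nonneg u : 0 <= pint J (stiff_term u u).
Proof. apply (pint_nonneg J HJ1); [apply stiff_term_deg_le3 | apply stiff_term_simpson_nonneg]. Qed.

Lemma stiff_eq0_inv u : pint J (stiff_term u u) = 0 -> forall j, (1 <= j <= J)%nat -> u j = u (j - 1)%nat.
Proof.
  intros H0 j Hj. pose proof (h_pos J HJ1).
  destruct (pint_eq0_inv J HJ1 _ (stiff_term_deg_le3 u u) (stiff_term_simpson_nonneg u) H0 j Hj)
    as (_ & E & _).
  unfold stiff_term in E.
  apply Rmult3_eq0_mid, dot_self_eq0 in E; [| apply X1_mid_pos, Hj | apply Rinv_0_lt_compat, nrm_pos, Hj].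
  unfold vdlt, dlt, c1, c2 in E. injection E as E1 E2.
  apply vec_ext; apply Rminus_diag_uniq; apply (Rmult_eq_reg_r (/ h J));
    [lra | apply Rinv_neq_0_compat; lra | lra | apply Rinv_neq_0_compat; lra].
Qed.

Lemma bform_definite u : bform u u = 0 -> nodal_zero u.
Proof.
  intros H. unfold bform in H. pose proof (mass_nonneg u). pose proof (stiff_nonneg u).
  assert (Hconst : forall j, (1 <= j <= J)%nat -> u j = u (j - 1)%nat) by (apply stiff_eq0_inv; lra).
  assert (Hu1 : u 1%nat = (0, 0)).
  { assert (E : mass_term u u 1 (q J 1) = 0) by (apply mass_eq0_inv; [lra | lia]).
    unfold mass_term, kappa_of, mask_axis, vnscale in E. rewrite elt_right, !velt_right in E by lia.
    rewrite axis_node_1, Bool.andb_false_r, dot_vscale_l in E.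
    apply Rmult3_eq0_mid in E; [| apply X1_node_pos, axis_node_1; lia | apply nrm_pos; lia].
    apply Rmult_integral in E as [E | E]; [| now apply dot_self_eq0].
    pose proof (Rinv_0_lt_compat _ Hdt). lra. }
  intros k. induction k as [| k IH]; intros Hk.
  - rewrite <- Hu1. symmetry. apply (Hconst 1%nat). lia.
  - rewrite (Hconst (S k)), Nat.sub_1_r by lia. apply IH. lia.
Qed.

Lemma VD_vnadd u w : VD u -> VD w -> VD (vnadd u w).
Proof.
  intros [[Hu1 Hu2] Hu3] [[Hw1 Hw2] Hw3]. unfold vnadd, vadd. split; [split |].
  - intros Hp. now rewrite (Hu1 Hp), (Hw1 Hp).
  - intros p Hp Hl. simpl. rewrite (Hu2 p Hp Hl), (Hw2 p Hp Hl). ring.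
  - intros p Hp. destruct (Hu3 p Hp) as (a1 & a2 & a3), (Hw3 p Hp) as (b1 & b2 & b3).
    repeat split; intros Hl; simpl.
    + rewrite (a1 Hl), (b1 Hl). ring.
    + rewrite (a2 Hl), (b2 Hl). ring.
    + rewrite (a3 Hl), (b3 Hl). apply vec_ext; simpl; ring.
Qed.

Lemma VD_vnscale c u : VD u -> VD (vnscale c u).
Proof.
  intros [[Hu1 Hu2] Hu3]. unfold vnscale, vscale. split; [split |].
  - intros Hp. now rewrite (Hu1 Hp).
  - intros p Hp Hl. simpl. rewrite (Hu2 p Hp Hl). ring.
  - intros p Hp. destruct (Hu3 p Hp) as (a1 & a2 & a3).
    repeat split; intros Hl; simpl.
    + rewrite (a1 Hl). ring.
    + rewrite (a2 Hl). ring.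
    + rewrite (a3 Hl). apply vec_ext; simpl; ring.
Qed.

Lemma VD_vcomb l c : (forall v, In v l -> VD v) -> VD (vcomb l c).
Proof.
  revert c. induction l as [| e l IH]; intros c H; simpl.
  - now repeat split.
  - apply VD_vnadd; [apply VD_vnscale, H; now left | apply IH; intros; apply H; now right].
Qed.

Definition bc_node (lab : bclab) (a : vec) : vec :=
  match lab with BD => (0, 0) | B0 | B1 => (0, snd a) | B2 => (fst a, 0) end.

Definition impose_bc (v : vnodal) : vnodal := fun k =>
  if periodic then (if Nat.eqb k J then v 0%nat else v k)
  else if Nat.eqb k 0 then bc_node lab0 (v 0%nat)
  else if Nat.eqb k J then bc_node lab1 (v J) else v k.

Lemma impose_bc_VD v : VD (impose_bc v).
Proof.
  assert (EJ0 : Nat.eqb J 0 = false) by (apply Nat.eqb_neq; lia).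
  assert (E0J : Nat.eqb 0 J = false) by (apply Nat.eqb_neq; lia).
  unfold impose_bc. split; [split |].
  - intros Hp. now rewrite Hp, Nat.eqb_refl, E0J.
  - intros p Hp Hl. rewrite Hp. destruct p; simpl in *; rewrite ?EJ0, ?Nat.eqb_refl, Hl; easy.
  - intros p Hp. rewrite Hp.
    destruct p; simpl in *; rewrite ?EJ0, ?Nat.eqb_refl; repeat split; intros Hl; now rewrite Hl.
Qed.

Lemma bc_node_id (lab : bclab) a :
  (lab = B0 -> fst a = 0) -> (lab = B1 -> fst a = 0) -> (lab = B2 -> snd a = 0) ->
  (lab = BD -> a = (0, 0)) -> bc_node lab a = a.
Proof.
  destruct a as [a1 a2]; destruct lab; simpl; intros H0 H1 H2 HD.
  - now rewrite HD.
  - now rewrite H0.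
  - now rewrite H1.
  - now rewrite H2.
Qed.

Lemma impose_bc_id v k : VD v -> (k <= J)%nat -> impose_bc v k = v k.
Proof.
  intros [[Hper H0] Hbc] Hk. unfold impose_bc. destruct periodic eqn:Ep.
  - destruct (Nat.eqb_spec k J) as [-> |]; [symmetry; now apply Hper | easy].
  - destruct (Nat.eqb_spec k 0) as [-> |]; [| destruct (Nat.eqb_spec k J) as [-> |]; [| easy]];
      [pose (p := false) | pose (p := true)];
      destruct (Hbc p eq_refl) as (H1 & H2 & HD); specialize (H0 p eq_refl);
      apply bc_node_id; simpl in *; auto.
Qed.

Lemma bc_node_vadd lab a b : bc_node lab (vadd a b) = vadd (bc_node lab a) (bc_node lab b).
Proof. destruct lab; apply vec_ext; simpl; ring. Qed.

Lemma bc_node_vscale lab c a : bc_node lab (vscale c a) = vscale c (bc_node lab a).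
Proof. destruct lab; apply vec_ext; simpl; ring. Qed.

Lemma impose_bc_vnadd u w : impose_bc (vnadd u w) = vnadd (impose_bc u) (impose_bc w).
Proof.
  apply functional_extensionality; intro k. unfold impose_bc, vnadd.
  destruct periodic, (k =? J)%nat, (k =? 0)%nat; now rewrite ?bc_node_vadd.
Qed.

Lemma impose_bc_vnscale c u : impose_bc (vnscale c u) = vnscale c (impose_bc u).
Proof.
  apply functional_extensionality; intro k. unfold impose_bc, vnscale.
  destruct periodic, (k =? J)%nat, (k =? 0)%nat; now rewrite ?bc_node_vscale.
Qed.

Definition node_vector (n : nat) (a : vec) : vnodal := fun k => if Nat.eqb k n then a else (0, 0).
Definition trunc (n : nat) (v : vnodal) : vnodal := fun k => if Nat.ltb k n then v k else (0, 0).

Fixpoint bc_basis (n : nat) : list vnodal :=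
  match n with
  | O => nil
  | S n => impose_bc (node_vector n (1, 0)) :: impose_bc (node_vector n (0, 1)) :: bc_basis n
  end.

Lemma trunc_S n v : trunc (S n) v =
  vnadd (vnscale (fst (v n)) (node_vector n (1, 0)))
        (vnadd (vnscale (snd (v n)) (node_vector n (0, 1))) (trunc n v)).
Proof.
  apply functional_extensionality; intro k. unfold trunc, vnadd, vnscale, node_vector.
  destruct (Nat.ltb_spec k (S n)), (Nat.ltb_spec k n), (Nat.eqb_spec k n); try lia;
    try subst; apply vec_ext; simpl; ring.
Qed.

Lemma impose_bc_trunc v k : (k <= J)%nat -> impose_bc (trunc (S J) v) k = impose_bc v k.
Proof.
  intros Hk. unfold impose_bc, trunc.
  replace (k <? S J)%nat with true by (symmetry; apply Nat.ltb_lt; lia).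
  replace (0 <? S J)%nat with true by (symmetry; apply Nat.ltb_lt; lia).
  replace (J <? S J)%nat with true by (symmetry; apply Nat.ltb_lt; lia).
  easy.
Qed.

Lemma bc_basis_spans n v : exists c, vcomb (bc_basis n) c = impose_bc (trunc n v).
Proof.
  induction n as [| n [c Hc]].
  - exists (fun _ => 0). apply functional_extensionality; intro k. unfold impose_bc, trunc. simpl.
    destruct periodic, (k =? J)%nat, (k =? 0)%nat, lab0, lab1; easy.
  - exists (fun i => match i with O => fst (v n) | 1%nat => snd (v n) | S (S i) => c i end).
    rewrite trunc_S, !impose_bc_vnadd, !impose_bc_vnscale, <- Hc. easy.
Qed.

Lemma bc_basis_VD n v : In v (bc_basis n) -> VD v.
Proof.
  induction n as [| n IH]; simpl; [easy |].
  intros [<- | [<- | Hv]]; auto using impose_bc_VD.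
Qed.

Lemma VD_spanned v : VD v -> exists c r, nodal_zero r /\ v = vnadd (vcomb (bc_basis (S J)) c) r.
Proof.
  intros Hv. destruct (bc_basis_spans (S J) v) as [c Hc].
  exists c, (vnadd v (vnscale (-1) (vcomb (bc_basis (S J)) c))). split.
  - intros k Hk. rewrite Hc. unfold vnadd, vnscale. rewrite impose_bc_trunc, impose_bc_id by easy.
    apply vec_ext; simpl; ring.
  - apply functional_extensionality; intro k. unfold vnadd, vnscale. apply vec_ext; simpl; ring.
Qed.

Lemma bform_solvable : exists dX, VD dX /\ forall eta, VD eta -> bform dX eta = load eta.
Proof.
  destruct (finite_dim_representation vnodal vnadd vnscale vnzero vnscale_0_vnzero bform nodal_zero
    bform_additive_l bform_homogeneous_l bform_additive_r bform_homogeneous_r bform_nodal_zero_r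
    bform_definite VD (bc_basis (S J)) load load_additive load_homogeneous load_nodal_zero VD_spanned)
    as [c Hc].
  exists (vcomb (bc_basis (S J)) c). split; [| exact Hc].
  apply VD_vcomb. intros v. apply bc_basis_VD.
Qed.

Lemma bform_unique dX dX' : VD dX -> VD dX' ->
  (forall eta, VD eta -> bform dX eta = load eta) -> (forall eta, VD eta -> bform dX' eta = load eta) ->
  forall k, (k <= J)%nat -> dX' k = dX k.
Proof.
  intros HdX HdX' Hsol Hsol' k Hk.
  set (e := vnadd dX' (vnscale (-1) dX)).
  assert (He : VD e) by (apply VD_vnadd, VD_vnscale; easy).
  assert (Hee : bform e e = 0).
  { unfold e at 1. rewrite bform_additive_l, bform_homogeneous_l, Hsol, Hsol' by easy. ring. }
  pose proof (bform_definite e Hee k Hk) as Ek. unfold e, vnadd, vnscale in Ek.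
  destruct (dX' k), (dX k). injection Ek as E1 E2. apply vec_ext; simpl in *; lra.
Qed.

Lemma second_eq_lhs dX K eta : (forall k, (k <= J)%nat -> K k = kappa_of dX k) ->
  ipS J lumped (fun j x => elt J (c1 X) j x * dot (velt J K j x) (velt J eta j x) * nrm J X j)
  + pint J (fun j x => elt J (c1 eta) j x * nrm J X j)
  + pint J (fun j x => elt J (c1 X) j x *
      dot (vdlt J (fun j => vadd (X j) (dX j)) j) (vdlt J eta j) * / nrm J X j)
  = bform dX eta + pint J (flux_term eta) + pint J (stiff_term X eta).
Proof.
  intros HK. unfold bform.
  rewrite (ipS_ext J lumped _ (mass_term dX eta))
    by (intros j Hj x; unfold mass_term; now rewrite (velt_ext J K (kappa_of dX)) by (apply HK; lia)).
  change (fun j => vadd (X j) (dX j)) with (vnadd X dX).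
  rewrite (pint_lincomb J HJ1 (fun j x => elt J (c1 X) j x *
      dot (vdlt J (vnadd X dX) j) (vdlt J eta j) * / nrm J X j)
    (stiff_term X eta) (stiff_term dX eta) 1 1 (stiff_term_deg_le3 X eta) (stiff_term_deg_le3 dX eta)).
  - unfold flux_term. ring.
  - intros j x. unfold stiff_term. rewrite vdlt_vnadd, dot_vadd_l. ring.
Qed.

Lemma inWs2_periodic K : inWs2 J periodic lab0 lab1 lumped K -> periodic = true -> K J = K 0%nat.
Proof.
  unfold inWs2, inWs, inW0, inVh_s, c1, c2. intros HK Hp.
  destruct lumped; destruct HK as [H1 H2]; apply vec_ext; (apply H1 || apply H2); easy.
Qed.

Lemma mask_axis_in_W u : (periodic = true -> u J = u 0%nat) -> inWs2 J periodic lab0 lab1 lumped (mask_axis u).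
Proof.
  intros Hper. unfold inWs2, inWs, inW0, inVh_s, mask_axis, c1, c2.
  destruct lumped; simpl; repeat split; intros.
  all: try (rewrite !axis_node_periodic by easy; now rewrite Hper).
  all: now rewrite ?Hper, ?axis_node_bnode.
Qed.

Lemma kappa_of_in_W dX : VD dX -> inWs2 J periodic lab0 lab1 lumped (kappa_of dX).
Proof.
  intros [[Hper _] _]. apply mask_axis_in_W. intros Hp. unfold vnscale. now rewrite Hper.
Qed.

(* On [d_0 I] the weight [X . e1] vanishes, so the mask in [kappa_of] is never seen there. *)
Lemma X1_kappa_of_node dX k c :
  fst (X k) * dot (vscale (/ dt) (vsub (vadd (X k) (dX k)) (X k))) c = fst (X k) * dot (kappa_of dX k) c.
Proof.
  unfold kappa_of, mask_axis, vnscale. destruct (lumped && axis_node k) eqn:E.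
  - apply andb_prop in E as [_ E]. rewrite X1_axis_node by easy. ring.
  - unfold dot, vscale, vsub, vadd. simpl. ring.
Qed.

Lemma kappa_of_first_eq dX chi :
  ipS J lumped (fun j x => elt J (c1 X) j x *
    dot (vscale (/ dt) (vsub (velt J (fun j => vadd (X j) (dX j)) j x) (velt J X j x))) (velt J chi j x)
    * nrm J X j)
  = ipS J lumped (fun j x => elt J (c1 X) j x * dot (velt J (kappa_of dX) j x) (velt J chi j x) * nrm J X j).
Proof.
  destruct lumped eqn:Hl; simpl.
  - unfold lint. f_equal. apply sum1_ext. intros j Hj.
    rewrite elt_left, elt_right, !velt_left, !velt_right by lia. unfold c1.
    now rewrite !X1_kappa_of_node.
  - apply pint_ext. intros j Hj x. unfold kappa_of, mask_axis. rewrite Hl. simpl.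
    unfold dot, velt, vscale, vsub, vnscale, elt, c1, c2, Rdiv. simpl. ring.
Qed.

Lemma node_in_element k : (k <= J)%nat -> exists j, (1 <= j <= J)%nat /\ (k = j - 1 \/ k = j)%nat.
Proof. intros Hk. destruct k as [| k]; [exists 1%nat | exists (S k)]; split; lia. Qed.

Lemma dot_mask_axis u k : dot (u k) (mask_axis u k) = dot (mask_axis u k) (mask_axis u k).
Proof. unfold mask_axis. destruct (lumped && axis_node k); [rewrite !dot_0_r |]; easy. Qed.

(* The integrand obtained by testing the first equation with the masked defect. *)
Definition defect_integrand (D : vnodal) j x :=
  elt J (c1 X) j x * dot (velt J D j x) (velt J (mask_axis D) j x) * nrm J X j.

Lemma defect_integrand_nodes D j : (1 <= j <= J)%nat ->
  defect_integrand D j (q J (j - 1)) = fst (X (j - 1)%nat) * dot (mask_axis D (j - 1)%nat)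
    (mask_axis D (j - 1)%nat) * nrm J X j /\
  defect_integrand D j (q J j) = fst (X j) * dot (mask_axis D j) (mask_axis D j) * nrm J X j.
Proof.
  intros Hj. unfold defect_integrand.
  rewrite elt_left, elt_right, !velt_left, !velt_right, !dot_mask_axis by lia. easy.
Qed.

Lemma defect_vanishes_lumped D : lumped = true -> ipS J lumped (defect_integrand D) = 0 ->
  forall k, (k <= J)%nat -> mask_axis D k = (0, 0).
Proof.
  intros Hl H0 k Hk. rewrite Hl in H0. simpl in H0.
  assert (Hnn : forall j, (1 <= j <= J)%nat ->
    0 <= defect_integrand D j (q J (j - 1)) /\ 0 <= defect_integrand D j (q J j)).
  { intros j Hj. destruct (defect_integrand_nodes D j Hj) as [-> ->].
    pose proof (nrm_pos j Hj). pose proof (X1_node_nonneg (j - 1) ltac:(lia)).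
    pose proof (X1_node_nonneg j ltac:(lia)). pose proof (dot_self_nonneg (mask_axis D (j - 1)%nat)).
    pose proof (dot_self_nonneg (mask_axis D j)). split; apply Rmult3_nonneg; lra. }
  destruct (node_in_element k Hk) as (j & Hj & Hkj).
  assert (Ek : fst (X k) * dot (mask_axis D k) (mask_axis D k) * nrm J X j = 0).
  { destruct (lint_eq0_inv J HJ1 _ Hnn H0 j Hj) as [E1 E2].
    destruct (defect_integrand_nodes D j Hj) as [F1 F2].
    destruct Hkj as [-> | ->]; congruence. }
  unfold mask_axis in *. rewrite Hl in *. simpl in *.
  destruct (axis_node k) eqn:Eax; [easy |].
  apply dot_self_eq0, (Rmult3_eq0_mid (fst (X k)) _ (nrm J X j)); auto using X1_node_pos, nrm_pos.
Qed.

Lemma defect_vanishes_exact D : lumped = false -> ipS J lumped (defect_integrand D) = 0 ->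
  forall k, (k <= J)%nat -> D k = (0, 0).
Proof.
  intros Hl H0 k Hk. rewrite Hl in H0. simpl in H0.
  assert (HD : mask_axis D = D) by (unfold mask_axis; now rewrite Hl).
  assert (Hnn : forall j, (1 <= j <= J)%nat ->
    0 <= defect_integrand D j (q J (j - 1)) /\ 0 <= defect_integrand D j (mid J j) /\
    0 <= defect_integrand D j (q J j)).
  { intros j Hj. destruct (defect_integrand_nodes D j Hj) as [-> ->].
    pose proof (nrm_pos j Hj). pose proof (X1_mid_pos j Hj). pose proof (X1_node_nonneg (j - 1) ltac:(lia)).
    pose proof (X1_node_nonneg j ltac:(lia)). unfold defect_integrand. rewrite HD.
    pose proof (dot_self_nonneg (D (j - 1)%nat)). pose proof (dot_self_nonneg (D j)).
    pose proof (dot_self_nonneg (velt J D j (mid J j))).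
    split; [| split]; apply Rmult3_nonneg; lra. }
  assert (Hdeg : forall j, deg_le3 (defect_integrand D j))
    by (intros j; unfold defect_integrand, dot, velt; simpl; solve_deg).
  destruct (node_in_element k Hk) as (j & Hj & Hkj).
  destruct (pint_eq0_inv J HJ1 _ Hdeg Hnn H0 j Hj) as (Ea & Em & Eb).
  destruct (defect_integrand_nodes D j Hj) as [Fa Fb]. rewrite HD in Fa, Fb.
  unfold defect_integrand in Em. rewrite HD, velt_mid in Em by lia.
  (* the midpoint value forces [D (j-1) = - D j]; an endpoint off the axis forces one of them to be 0 *)
  apply Rmult3_eq0_mid, dot_self_eq0 in Em; [| now apply X1_mid_pos | now apply nrm_pos].
  apply vmid_eq0_iff in Em.
  assert (Hend : D (j - 1)%nat = (0, 0) \/ D j = (0, 0)).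
  { destruct (axis_node_adjacent j Hj) as [Ej | Ej]; [left; rewrite Fa in Ea | right; rewrite Fb in Eb].
    - apply dot_self_eq0, (Rmult3_eq0_mid (fst (X (j - 1)%nat)) _ (nrm J X j)); try easy.
      + apply X1_node_pos; [lia | easy].
      + now apply nrm_pos.
    - apply dot_self_eq0, (Rmult3_eq0_mid (fst (X j)) _ (nrm J X j)); try easy.
      + apply X1_node_pos; [lia | easy].
      + now apply nrm_pos. }
  destruct Hkj as [-> | ->]; tauto.
Qed.

Definition defect (dX K : vnodal) : vnodal := vnadd (vnscale (/ dt) dX) (vnscale (-1) K).

Lemma first_eq_defect dX K :
  scheme J periodic lab0 lab1 rho0 rho1 lumped dt X dX K -> ipS J lumped (defect_integrand (defect dX K)) = 0.
Proof.
  intros (HdX & HK & Hfirst & _).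
  set (chi := mask_axis (defect dX K)).
  assert (Hchi : inWs2 J periodic lab0 lab1 lumped chi).
  { apply mask_axis_in_W. intros Hp. unfold defect, vnadd, vnscale.
    destruct HdX as [[Hper _] _]. now rewrite Hper, (inWs2_periodic K). }
  specialize (Hfirst chi Hchi).
  match type of Hfirst with
  | ipS _ _ ?G1 = ipS _ _ ?G2 => rewrite (ipS_lincomb J HJ1 lumped _ G1 G2 1 (-1)), Hfirst; [ring | | |]
  end.
  - intros j. unfold dot, velt, vscale, vsub. simpl. solve_deg.
  - intros j. unfold dot, velt. simpl. solve_deg.
  - intros j x. unfold defect_integrand. fold chi. unfold defect.
    unfold dot, velt, vscale, vsub, vadd, vnadd, vnscale, elt, c1, c2, Rdiv. simpl. ring.
Qed.

Lemma kappa_of_unique dX K :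
  scheme J periodic lab0 lab1 rho0 rho1 lumped dt X dX K -> forall k, (k <= J)%nat -> K k = kappa_of dX k.
Proof.
  intros Hs k Hk. pose proof (first_eq_defect dX K Hs) as H0. destruct Hs as (_ & HK & _).
  assert (Hdefect : defect dX K k = (0, 0) -> K k = vscale (/ dt) (dX k)).
  { unfold defect, vnadd, vnscale. intros E. injection E as E1 E2. apply vec_ext; simpl in *; lra. }
  unfold kappa_of, mask_axis, vnscale. destruct lumped eqn:Hl; simpl.
  - rewrite <- Hl in H0. pose proof (defect_vanishes_lumped _ Hl H0 k Hk) as Ek. unfold mask_axis in Ek. rewrite Hl in Ek.
    simpl in Ek. destruct (axis_node k) eqn:Ax; [| now apply Hdefect].
    apply axis_node_spec in Ax as (Hp & p & -> & Hlab).
    unfold inWs2, inWs, inW0, c1, c2 in HK. destruct HK as [[_ H1] [_ H2]].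
    apply vec_ext; simpl; auto.
  - rewrite <- Hl in H0. now apply Hdefect, (defect_vanishes_exact _ Hl H0).
Qed.

Lemma second_eq_iff dX K eta : (forall k, (k <= J)%nat -> K k = kappa_of dX k) ->
  ipS J lumped (fun j x => elt J (c1 X) j x * dot (velt J K j x) (velt J eta j x) * nrm J X j)
  + pint J (fun j x => elt J (c1 eta) j x * nrm J X j)
  + pint J (fun j x => elt J (c1 X) j x *
      dot (vdlt J (fun j => vadd (X j) (dX j)) j) (vdlt J eta j) * / nrm J X j)
  = - (bterm J periodic lab0 lab1 rho0 rho1 X eta false + bterm J periodic lab0 lab1 rho0 rho1 X eta true)
  <-> bform dX eta = load eta.
Proof. intros HK. rewrite second_eq_lhs by easy. unfold load, boundary_sum. lra. Qed.

Lemma scheme_well_posed :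
  exists dX K : vnodal,
    scheme J periodic lab0 lab1 rho0 rho1 lumped dt X dX K /\
    forall dX' K' : vnodal,
      scheme J periodic lab0 lab1 rho0 rho1 lumped dt X dX' K' ->
      forall j : nat, (j <= J)%nat -> dX' j = dX j /\ K' j = K j.
Proof.
  destruct bform_solvable as [dX [HdX Hsol]].
  exists dX, (kappa_of dX). split.
  - split; [easy |]. split; [now apply kappa_of_in_W |]. split.
    + intros chi _. apply kappa_of_first_eq.
    + intros eta Heta. apply second_eq_iff; auto.
  - intros dX' K' Hs j Hj.
    pose proof (kappa_of_unique dX' K' Hs) as HK.
    destruct Hs as (HdX' & _ & _ & Hsecond).
    assert (Ej : dX' j = dX j).
    { apply (bform_unique dX dX'); try easy.
      intros eta Heta. apply (second_eq_iff dX' K'); auto. }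
    split; [easy |]. rewrite HK by easy. unfold kappa_of, mask_axis, vnscale. now rewrite Ej.
Qed.

End Scheme.

Theorem lemma4p4 (J : nat) (periodic : bool) (lab0 lab1 : bclab) (rho0 rho1 : R)
  (lumped : bool) (X : vnodal) (dt : R) :
  (3 <= J)%nat -> Rabs rho0 <= 1 -> Rabs rho1 <= 1 ->
  inV0 J periodic lab0 lab1 X ->
  assumpA J periodic lab0 lab1 X ->
  0 < dt ->
  exists dX K : vnodal,
    scheme J periodic lab0 lab1 rho0 rho1 lumped dt X dX K /\
    forall dX' K' : vnodal,
      scheme J periodic lab0 lab1 rho0 rho1 lumped dt X dX' K' ->
      forall j : nat, (j <= J)%nat -> dX' j = dX j /\ K' j = K j.
Proof.
  (* the bounds on rho0, rho1 matter for stability of the scheme, not for its solvability *)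
  intros HJ _ _ HX0 HA Hdt. apply scheme_well_posed; [lia | easy ..].
Qed.
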